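(* There exists a two-player differentiable game with parameters $\theta=(x,y)\in\mathbb{R}\times\mathbb{R}$ which is a smooth market, whose losses $L^1,L^2$ are both coercive and analytic, which is nondegenerate, and whose only critical point is a strict maximum.
   Context: A differentiable game consists of $n$ players with parameters $\theta=(\theta^1,\dots,\theta^n)\in\mathbb{R}^d$, $\theta^i\in\mathbb{R}^{d_i}$, $\sum_i d_i=d$, and twice continuously differentiable losses $L^i:\mathbb{R}^d\to\mathbb{R}$. The simultaneous gradient is $\xi=(\nabla_{\theta^1}L^1,\dots,\nabla_{\theta^n}L^n)\in\mathbb{R}^d$, and the game Hessian is $H=\nabla\xi$ (the $d\times d$ matrix with blocks $\nabla_{\theta^j}\nabla_{\theta^i}L^i$). A critical point is a $\bar\theta$ with $\xi(\bar\theta)=0$. A critical point is a strict (local) maximum if $H(\bar\theta)\prec 0$, meaning $u^\top H(\bar\theta)u<0$ for all nonzero $u$. The game is a (smooth) market if $L^i(\theta)=L^i(\theta^i)+\sum_{j\ne i}g_{ij}(\theta^i,\theta^j)$ with $g_{ij}(\theta^i,\theta^j)+g_{ji}(\theta^j,\theta^i)=0$ for all $i,j$ (pairwise zero-sum interactions). A loss is coercive if $L^i(\theta)\to\infty$ as $\|\theta\|\to\infty$; the game is coercive if all its losses are. The game is nondegenerate if $H$ is invertible at every critical point. *)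

From Stdlib Require Import Reals.
From Coquelicot Require Import Coquelicot.
Open Scope R_scope.

(* A two-player game with theta = (x, y) in R x R; player 1 controls x,
   player 2 controls y.  Losses are functions L : R -> R -> R, L x y. *)

(* Real analyticity of a function on R^2: around every point (a,b) it equals
   an absolutely convergent double power series
     sum_{i,j} c i j (x-a)^i (y-b)^j.
   The double series is enumerated by total degree n = i + j; absolute
   convergence makes the value independent of the enumeration. *)
Definition dterm (c : nat -> nat -> R) (a b x y : R) (n : nat) : R :=
  sum_f_R0 (fun i => c i (n - i)%nat * (x - a) ^ i * (y - b) ^ (n - i)) n.

Definition dterm_abs (c : nat -> nat -> R) (a b x y : R) (n : nat) : R :=
  sum_f_R0 (fun i => Rabs (c i (n - i)%nat) * Rabs (x - a) ^ i
                      * Rabs (y - b) ^ (n - i)) n.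

Definition analytic2 (L : R -> R -> R) : Prop :=
  forall a b : R, exists r : R, 0 < r /\
    exists c : nat -> nat -> R,
      forall x y : R, Rabs (x - a) < r -> Rabs (y - b) < r ->
        ex_series (dterm_abs c a b x y) /\ is_series (dterm c a b x y) (L x y).

Definition coercive2 (L : R -> R -> R) : Prop :=
  forall M : R, exists K : R, forall x y : R,
    sqrt (x ^ 2 + y ^ 2) > K -> L x y > M.

Definition xi1 (L1 : R -> R -> R) (x y : R) : R := Derive (fun u => L1 u y) x.
Definition xi2 (L2 : R -> R -> R) (x y : R) : R := Derive (fun v => L2 x v) y.

Definition H11 (L1 L2 : R -> R -> R) (x y : R) : R :=
  Derive (fun u => xi1 L1 u y) x.
Definition H12 (L1 L2 : R -> R -> R) (x y : R) : R :=
  Derive (fun v => xi1 L1 x v) y.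
Definition H21 (L1 L2 : R -> R -> R) (x y : R) : R :=
  Derive (fun u => xi2 L2 u y) x.
Definition H22 (L1 L2 : R -> R -> R) (x y : R) : R :=
  Derive (fun v => xi2 L2 x v) y.

Definition critical (L1 L2 : R -> R -> R) (x y : R) : Prop :=
  xi1 L1 x y = 0 /\ xi2 L2 x y = 0.

Definition hess_invertible (L1 L2 : R -> R -> R) (x y : R) : Prop :=
  H11 L1 L2 x y * H22 L1 L2 x y - H12 L1 L2 x y * H21 L1 L2 x y <> 0.

Definition nondegenerate (L1 L2 : R -> R -> R) : Prop :=
  forall x y, critical L1 L2 x y -> hess_invertible L1 L2 x y.

Definition hess_neg_def (L1 L2 : R -> R -> R) (x y : R) : Prop :=
  forall u1 u2 : R, (u1 <> 0 \/ u2 <> 0) ->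
    u1 * (H11 L1 L2 x y * u1 + H12 L1 L2 x y * u2)
    + u2 * (H21 L1 L2 x y * u1 + H22 L1 L2 x y * u2) < 0.

Definition strict_max (L1 L2 : R -> R -> R) (x y : R) : Prop :=
  critical L1 L2 x y /\ hess_neg_def L1 L2 x y.

Definition market2 (L1 L2 : R -> R -> R) : Prop :=
  exists (f1 f2 : R -> R) (g12 g21 : R -> R -> R),
    (forall x y, g12 x y + g21 y x = 0) /\
    (forall x y, L1 x y = f1 x + g12 x y) /\
    (forall x y, L2 x y = f2 y + g21 y x).

(** The game [L1 = x^4/4 - x^2/2 + x y + y^4], [L2 = y^4/4 - y^2/2 - x y + x^4]
    is a market because its only mixed term [x y + y^4 - x^4] enters the two
    losses with opposite signs, and both losses are quartic polynomials that
    grow like [(x^2 + y^2)^2 / 8], hence analytic and coercive.  Its simultaneous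
    gradient is [(x^3 - x + y, y^3 - y - x)]: at the origin the Hessian has
    negative diagonal and skew off-diagonal part, so it is negative definite,
    and an elementary sum-of-squares argument shows that the origin is the only
    zero of the gradient. *)

From Stdlib Require Import Reals Lra Psatz.
From Coquelicot Require Import Coquelicot.
Open Scope R_scope.

Lemma is_series_eventually_zero (f : nat -> R) (N : nat) :
  (forall n, (N < n)%nat -> f n = 0) -> is_series f (sum_f_R0 f N).
Proof.
  intros f_zero. apply is_series_Reals. intros eps eps_pos. exists N.
  intros n n_ge.
  assert (sum_stable : forall k, sum_f_R0 f (N + k) = sum_f_R0 f N).
  { induction k as [|k IHk]; [now rewrite Nat.add_0_r|].
    rewrite Nat.add_succ_r, tech5, IHk, f_zero by lia. ring. }
  replace n with (N + (n - N))%nat by lia.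
  rewrite sum_stable. unfold R_dist. rewrite Rminus_diag, Rabs_R0. exact eps_pos.
Qed.

Lemma analytic2_of_finite_expansion (N : nat) (L : R -> R -> R)
    (c : R -> R -> nat -> nat -> R) :
  (forall a b i j, (N < i + j)%nat -> c a b i j = 0) ->
  (forall a b x y, sum_f_R0 (dterm (c a b) a b x y) N = L x y) ->
  analytic2 L.
Proof.
  intros c_zero expansion a b. exists 1. split; [lra|].
  exists (c a b). intros x y _ _. split.
  - eexists. apply (is_series_eventually_zero _ N).
    intros n n_gt. apply sum_eq_R0. intros i i_le.
    rewrite c_zero, Rabs_R0 by lia. ring.
  - rewrite <- (expansion a b). apply (is_series_eventually_zero _ N).
    intros n n_gt. apply sum_eq_R0. intros i i_le.
    rewrite c_zero by lia. ring.
Qed.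

Lemma coercive2_of_quartic_minorant (a b : R) (L : R -> R -> R) :
  0 < a ->
  (forall x y, a * (x ^ 2 + y ^ 2) ^ 2 - b * (x ^ 2 + y ^ 2) <= L x y) ->
  coercive2 L.
Proof.
  intros a_pos minorant M.
  set (K := (Rabs b + Rabs M) / a + 1).
  assert (aK : a * K = Rabs b + Rabs M + a) by (unfold K; field; lra).
  assert (K_ge1 : 1 <= K).
  { unfold K. assert (0 <= (Rabs b + Rabs M) / a); [|lra].
    pose proof (Rabs_pos b). pose proof (Rabs_pos M).
    apply Rdiv_le_0_compat; lra. }
  exists K. intros x y norm_gt.
  set (s := x ^ 2 + y ^ 2) in *.
  assert (s_gt : K < s).
  { assert (s_nonneg : 0 <= s) by (unfold s; nra).
    rewrite <- (sqrt_sqrt s s_nonneg). pose proof (sqrt_pos s). nra. }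
  specialize (minorant x y). fold s in minorant.
  pose proof (Rle_abs M). pose proof (Rle_abs b). pose proof (Rabs_pos M).
  assert (slope : Rabs M + a < a * s - Rabs b) by nra.
  assert (Rabs M + a < s * (a * s - Rabs b)) by nra.
  nra.
Qed.

Lemma hess_neg_def_of_skew (L1 L2 : R -> R -> R) (x y : R) :
  H11 L1 L2 x y < 0 -> H22 L1 L2 x y < 0 ->
  H12 L1 L2 x y + H21 L1 L2 x y = 0 ->
  hess_neg_def L1 L2 x y.
Proof.
  unfold hess_neg_def.
  set (h11 := H11 L1 L2 x y). set (h12 := H12 L1 L2 x y).
  set (h21 := H21 L1 L2 x y). set (h22 := H22 L1 L2 x y).
  intros h11_neg h22_neg skew u1 u2 u_nonzero.
  replace (u1 * (h11 * u1 + h12 * u2) + u2 * (h21 * u1 + h22 * u2))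
    with (h11 * u1 ^ 2 + h22 * u2 ^ 2 + (h12 + h21) * u1 * u2) by ring.
  rewrite skew.
  pose proof (pow2_ge_0 u1). pose proof (pow2_ge_0 u2).
  destruct u_nonzero as [u_nz | u_nz]; pose proof (pow2_gt_0 _ u_nz); nra.
Qed.

(** If the Hessian [H] were singular, [u = (-H12, H11)] would satisfy [H u = 0],
    and [u <> 0] because [H11 = e1^T H e1 < 0]. *)
Lemma hess_invertible_of_neg_def (L1 L2 : R -> R -> R) (x y : R) :
  hess_neg_def L1 L2 x y -> hess_invertible L1 L2 x y.
Proof.
  unfold hess_neg_def, hess_invertible.
  set (h11 := H11 L1 L2 x y). set (h12 := H12 L1 L2 x y).
  set (h21 := H21 L1 L2 x y). set (h22 := H22 L1 L2 x y).
  intros neg_def singular.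
  assert (h11_neg : h11 < 0).
  { specialize (neg_def 1 0 (or_introl R1_neq_R0)). lra. }
  specialize (neg_def (- h12) h11 (or_intror (Rlt_not_eq _ _ h11_neg))).
  replace (- h12 * (h11 * - h12 + h12 * h11) + h11 * (h21 * - h12 + h22 * h11))
    with (h11 * (h11 * h22 - h12 * h21)) in neg_def by ring.
  rewrite singular in neg_def. lra.
Qed.

Definition L1 (x y : R) : R := x ^ 4 / 4 - x ^ 2 / 2 + x * y + y ^ 4.
Definition L2 (x y : R) : R := y ^ 4 / 4 - y ^ 2 / 2 - x * y + x ^ 4.

Lemma market2_L : market2 L1 L2.
Proof.
  exists (fun x => 5 / 4 * x ^ 4 - x ^ 2 / 2), (fun y => 5 / 4 * y ^ 4 - y ^ 2 / 2),
    (fun x y => x * y + y ^ 4 - x ^ 4), (fun y x => - (x * y + y ^ 4 - x ^ 4)).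
  split; [|split]; intros x y; unfold L1, L2; field.
Qed.

Lemma coercive2_L1 : coercive2 L1.
Proof.
  apply (coercive2_of_quartic_minorant (1 / 8) 1). { lra. }
  intros x y. unfold L1.
  pose proof (pow2_ge_0 (x + y)). pose proof (pow2_ge_0 (x ^ 2 - y ^ 2)).
  pose proof (pow2_ge_0 (y ^ 2)). nra.
Qed.

Lemma coercive2_L2 : coercive2 L2.
Proof.
  apply (coercive2_of_quartic_minorant (1 / 8) 1). { lra. }
  intros x y. unfold L2.
  pose proof (pow2_ge_0 (x - y)). pose proof (pow2_ge_0 (x ^ 2 - y ^ 2)).
  pose proof (pow2_ge_0 (x ^ 2)). nra.
Qed.

(** Taylor coefficients [d_x^i d_y^j L(a, b) / (i! j!)] of [L1] and [L2]. *)
Definition taylor_L1 (a b : R) (i j : nat) : R :=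
  match i, j with
  | 0, 0 => L1 a b
  | 1, 0 => a ^ 3 - a + b
  | 0, 1 => a + 4 * b ^ 3
  | 2, 0 => 3 / 2 * a ^ 2 - 1 / 2
  | 1, 1 => 1
  | 0, 2 => 6 * b ^ 2
  | 3, 0 => a
  | 0, 3 => 4 * b
  | 4, 0 => 1 / 4
  | 0, 4 => 1
  | _, _ => 0
  end.

Definition taylor_L2 (a b : R) (i j : nat) : R :=
  match i, j with
  | 0, 0 => L2 a b
  | 0, 1 => b ^ 3 - b - a
  | 1, 0 => - b + 4 * a ^ 3
  | 0, 2 => 3 / 2 * b ^ 2 - 1 / 2
  | 1, 1 => -1
  | 2, 0 => 6 * a ^ 2
  | 0, 3 => b
  | 3, 0 => 4 * a
  | 0, 4 => 1 / 4
  | 4, 0 => 1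
  | _, _ => 0
  end.

Lemma analytic2_L1 : analytic2 L1.
Proof.
  apply (analytic2_of_finite_expansion 4 _ taylor_L1).
  - intros a b i j deg_gt.
    destruct i as [|[|[|[|[|i]]]]]; destruct j as [|[|[|[|[|j]]]]];
      simpl in *; solve [lia | reflexivity].
  - intros a b x y. unfold dterm, taylor_L1, L1. simpl. field.
Qed.

Lemma analytic2_L2 : analytic2 L2.
Proof.
  apply (analytic2_of_finite_expansion 4 _ taylor_L2).
  - intros a b i j deg_gt.
    destruct i as [|[|[|[|[|i]]]]]; destruct j as [|[|[|[|[|j]]]]];
      simpl in *; solve [lia | reflexivity].
  - intros a b x y. unfold dterm, taylor_L2, L2. simpl. field.
Qed.

Lemma xi1_L1 x y : xi1 L1 x y = x ^ 3 - x + y.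
Proof. apply is_derive_unique. unfold L1. auto_derive; [easy | field]. Qed.

Lemma xi2_L2 x y : xi2 L2 x y = y ^ 3 - y - x.
Proof. apply is_derive_unique. unfold L2. auto_derive; [easy | field]. Qed.

Lemma H11_L x y : H11 L1 L2 x y = 3 * x ^ 2 - 1.
Proof.
  unfold H11. rewrite (Derive_ext _ _ _ (fun u => xi1_L1 u y)).
  apply is_derive_unique. auto_derive; [easy | ring].
Qed.

Lemma H12_L x y : H12 L1 L2 x y = 1.
Proof.
  unfold H12. rewrite (Derive_ext _ _ _ (xi1_L1 x)).
  apply is_derive_unique. auto_derive; [easy | ring].
Qed.

Lemma H21_L x y : H21 L1 L2 x y = -1.
Proof.
  unfold H21. rewrite (Derive_ext _ _ _ (fun u => xi2_L2 u y)).
  apply is_derive_unique. auto_derive; [easy | ring].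
Qed.

Lemma H22_L x y : H22 L1 L2 x y = 3 * y ^ 2 - 1.
Proof.
  unfold H22. rewrite (Derive_ext _ _ _ (xi2_L2 x)).
  apply is_derive_unique. auto_derive; [easy | ring].
Qed.

(** With [s = x^2 + y^2], the combinations [x xi1 + y xi2] and [y xi1 - x xi2]
    give [x^4 + y^4 = s] and [x y (x^2 - y^2) = -s]; the squares of
    [x^2 - y^2] and [x^2 - y^2 + 2 x y] then force [4 s <= s^2 <= 2 s]. *)
Lemma critical_L_origin x y : critical L1 L2 x y -> x = 0 /\ y = 0.
Proof.
  unfold critical. rewrite xi1_L1, xi2_L2. intros [xi1_0 xi2_0].
  set (s := x ^ 2 + y ^ 2).
  assert (quartic : x ^ 4 + y ^ 4 = s).
  { unfold s. transitivity (x * (x ^ 3 - x + y) + y * (y ^ 3 - y - x) + s).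
    - unfold s. ring.
    - rewrite xi1_0, xi2_0. unfold s. ring. }
  assert (mixed : x * y * (x ^ 2 - y ^ 2) = - s).
  { transitivity (y * (x ^ 3 - x + y) - x * (y ^ 3 - y - x) - s).
    - unfold s. ring.
    - rewrite xi1_0, xi2_0. ring. }
  assert (upper : s ^ 2 <= 2 * s).
  { pose proof (pow2_ge_0 (x ^ 2 - y ^ 2)).
    replace (s ^ 2) with (2 * (x ^ 4 + y ^ 4) - (x ^ 2 - y ^ 2) ^ 2)
      by (unfold s; ring). lra. }
  assert (lower : 4 * s <= s ^ 2).
  { pose proof (pow2_ge_0 (x ^ 2 - y ^ 2 + 2 * x * y)).
    replace ((x ^ 2 - y ^ 2 + 2 * x * y) ^ 2)
      with (s ^ 2 + 4 * (x * y * (x ^ 2 - y ^ 2))) in * by (unfold s; ring).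
    lra. }
  assert (s_zero : s = 0) by (assert (0 <= s) by (unfold s; nra); nra).
  unfold s in s_zero. split; nra.
Qed.

Lemma strict_max_L_origin : strict_max L1 L2 0 0.
Proof.
  split.
  - unfold critical. rewrite xi1_L1, xi2_L2. split; ring.
  - apply hess_neg_def_of_skew; rewrite ?H11_L, ?H12_L, ?H21_L, ?H22_L; lra.
Qed.

Theorem theorem1 :
  exists L1 L2 : R -> R -> R,
    market2 L1 L2 /\
    coercive2 L1 /\ coercive2 L2 /\
    analytic2 L1 /\ analytic2 L2 /\
    nondegenerate L1 L2 /\
    exists x0 y0 : R,
      strict_max L1 L2 x0 y0 /\
      (forall x y, critical L1 L2 x y -> x = x0 /\ y = y0).
Proof.
  exists L1, L2.
  split; [exact market2_L|].
  split; [exact coercive2_L1|].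
  split; [exact coercive2_L2|].
  split; [exact analytic2_L1|].
  split; [exact analytic2_L2|].
  split.
  - intros x y crit. destruct (critical_L_origin x y crit) as [-> ->].
    apply hess_invertible_of_neg_def, strict_max_L_origin.
  - exists 0, 0. split; [exact strict_max_L_origin | exact critical_L_origin].
Qed.
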